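(* Let $H$ be a subgroup of $\operatorname{Sym}_n$ with $n\geq 3$ such that $H_2=H_{n-1}=\{\mathrm{id}\}$. Then for every $1\leq i\leq n$ there exist $1\leq j,j'\leq n$ such that $j\neq i$, $j'\neq i$, $x_ix_j\notin A$ and $x_{j'}x_i\notin\tilde A$.
   Context: $H_i=\{\sigma\in H\mid\sigma(i)=i\}$. $x_1,\dots,x_n$ are the free generators of the free monoid $\mathrm{FM}_n$. $A=\{x_{\sigma(n-1)}x_{\sigma(n)}\mid\sigma\in H\}$ and $\tilde A=\{x_{\sigma(1)}x_{\sigma(2)}\mid\sigma\in H\}$. *)

From mathcomp Require Import all_boot all_fingroup.
Set Implicit Arguments. Unset Strict Implicit. Unset Printing Implicit Defensive.
Local Open Scope group_scope.

(* Indices 1..n of the paper are the ordinals 'I_n, shifted by one: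
   paper index k corresponds to the ordinal with value k-1. *)

(* The free monoid FM_n on x_1..x_n: words = seq 'I_n, product = concatenation. *)
Definition FM (n : nat) := seq 'I_n.
Definition gen n (i : 'I_n) : FM n := [:: i].

Definition stab n (H : {group {perm 'I_n}}) (i : 'I_n) : {set {perm 'I_n}} :=
  [set s in H | s i == i].

(* w \in A = { x_{s(n-1)} x_{s(n)} | s \in H } *)
Definition inA n (H : {group {perm 'I_n}}) (w : FM n) : Prop :=
  exists2 s, s \in H & exists p q : 'I_n,
    [/\ val p = (n - 2)%N, val q = (n - 1)%N & w = gen (s p) ++ gen (s q)].

(* w \in Ã = { x_{s(1)} x_{s(2)} | s \in H } *)
Definition inAt n (H : {group {perm 'I_n}}) (w : FM n) : Prop :=
  exists2 s, s \in H & exists p q : 'I_n,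
    [/\ val p = 0%N, val q = 1%N & w = gen (s p) ++ gen (s q)].

From mathcomp Require Import all_boot all_fingroup.
Set Implicit Arguments.
Unset Strict Implicit.
Unset Printing Implicit Defensive.
Local Open Scope group_scope.

(* If the stabiliser of p in H is trivial, an element of H is determined by
   the image of p, so the image of p determines the image of every other
   point.  Hence a two-letter word of A (resp. Ã) is determined by its first
   (resp. second) letter, and since n >= 3 some j avoids both i and that
   forced letter. *)

Lemma exists_ord_neq2 n (i k : 'I_n) : (3 <= n)%N -> exists j : 'I_n, j != i /\ j != k.
Proof.
move=> n_ge3.
have : (0 < #|~: [set i; k]|)%N.
  rewrite cardsCs setCK card_ord subn_gt0; apply: leq_ltn_trans n_ge3.
  by rewrite cards2; case: (i != k).
by case/card_gt0P=> j; rewrite !inE negb_or => /andP[ji jk]; exists j.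
Qed.

Section TrivialStabiliser.

Variables (n : nat) (H : {group {perm 'I_n}}) (p : 'I_n).
Hypothesis stab_p1 : stab H p = [set 1].

Lemma stab1_inj : {in H &, forall s t : {perm 'I_n}, s p = t p -> s = t}.
Proof.
move=> s t sH tH spt; apply/eqP; rewrite -(can_eq (mulgK t^-1)) mulgV.
suff : s * t^-1 \in stab H p by rewrite stab_p1 inE.
by rewrite inE groupM ?groupV //= permM spt -permM mulgV perm1.
Qed.

Lemma stab1_image_determined (q i : 'I_n) :
  exists k : 'I_n, forall s, s \in H -> s p = i -> s q = k.
Proof.
case: (pickP [pred s in H | s p == i]) => [s /andP[sH /eqP spi] | no_s].
  by exists (s q) => t tH tpi; rewrite (@stab1_inj t s) ?spi.
by exists q => s sH spi; move: (no_s s); rewrite /= sH spi eqxx.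
Qed.

End TrivialStabiliser.

Theorem lemma4p3 (n : nat) (H : {group {perm 'I_n}}) :
  (3 <= n)%N ->
  (forall p : 'I_n, val p = 1%N -> stab H p = [set 1]) ->
  (forall p : 'I_n, val p = (n - 2)%N -> stab H p = [set 1]) ->
  forall i : 'I_n, exists j j' : 'I_n,
    [/\ j != i, j' != i, ~ inA H (gen i ++ gen j) & ~ inAt H (gen j' ++ gen i)].
Proof.
move=> n_ge3 stab_2 stab_n1 i.
have n0 : (0 < n)%N by apply: leq_trans n_ge3.
have n1 : (1 < n)%N by apply: leq_trans n_ge3.
have n2 : (n - 2 < n)%N by rewrite ltn_subrL.
have n3 : (n - 1 < n)%N by rewrite ltn_subrL.
have [k kP] := stab1_image_determined (stab_n1 (Ordinal n2) erefl) (Ordinal n3) i.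
have [k' k'P] := stab1_image_determined (stab_2 (Ordinal n1) erefl) (Ordinal n0) i.
have [j [ji jk]] := exists_ord_neq2 i k n_ge3.
have [j' [j'i j'k']] := exists_ord_neq2 i k' n_ge3.
exists j, j'; split=> //.
- case=> s sH [a [b [va vb [sa sb]]]].
  have [ea eb] : a = Ordinal n2 /\ b = Ordinal n3 by split; apply: val_inj.
  subst a b.
  by move/eqP: jk; rewrite sb kP.
- case=> s sH [a [b [va vb [sa sb]]]].
  have [ea eb] : a = Ordinal n0 /\ b = Ordinal n1 by split; apply: val_inj.
  subst a b.
  by move/eqP: j'k'; rewrite sa k'P.
Qed.
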